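(* Let $\mathcal{D} = \langle S, A, T, s_0, \gamma, S_G\rangle$ be a goal-directed MDP with deterministic transitions (for instance a determinization $\delta(\mathcal{M})$) and $0<\gamma<1$. Let $s_i\in S\setminus S_G$ be a target state, and let $n<0<p$ be reals with $|n|\ge p$. Define the reward function $R^{s_i}: S\to\mathbb{R}$ by $R^{s_i}(s) = n$ if $s = s_i$, $R^{s_i}(s) = p$ if $s\in S_G$, and $R^{s_i}(s)=0$ otherwise, and let $V^*(s_0)$ be the optimal value at $s_0$ of the MDP $\langle S, A, T, s_0,\gamma, R^{s_i}\rangle$. Then $s_i$ is not a bottleneck state of $\mathcal{D}$ if and only if $V^*(s_0) > 0$.
   Context: A goal-directed MDP is a tuple $\langle S, A, T, s_0, \gamma, S_G\rangle$ with finite state set $S$, finite action set $A$, transition function $T: S\times A\times S\to[0,1]$ with $\sum_{s'}T(s,a,s')=1$, initial state $s_0$, discount $\gamma$, and absorbing goal set $S_G\subseteq S$. It has deterministic transitions if for every $s,a$ there is $s'$ with $T(s,a,s')=1$. A policy is a deterministic stationary map $\pi:S\to A$. A goal-reaching trace of $\pi$ from $s$ is a finite sequence $\langle x_0,\pi(x_0),x_1,\dots,x_k\rangle$ with $x_0=s$, $T(x_j,\pi(x_j),x_{j+1})>0$ for $j<k$, and $x_k\in S_G$. A state $b$ is a bottleneck state if for every policy $\pi$ and every goal-reaching trace $\langle x_0,\dots,x_k\rangle$ of $\pi$ from $s_0$, $b\in\{x_0,\dots,x_k\}$. Value convention: for a reward function $R:S\to\mathbb{R}$ and policy $\pi$,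 with state sequence $s_0=x_0,x_1,\dots$ generated by $\pi$, $V^\pi(s_0) = \mathbb{E}\big[\sum_{t=0}^{\tau}\gamma^t R(x_t)\big]$ where $\tau$ is the first time $x_t\in S_G$ (the episode terminates on entering $S_G$; if $S_G$ is never reached the sum runs over all $t\ge 0$), and $V^*(s_0)=\max_\pi V^\pi(s_0)$ over deterministic stationary policies. *)

From HB Require Import structures.
From mathcomp Require Import all_boot all_order all_algebra.
From mathcomp Require Import all_classical all_reals all_analysis.
Set Implicit Arguments. Unset Strict Implicit. Unset Printing Implicit Defensive.
Import Order.TTheory GRing.Theory Num.Theory.
Import numFieldNormedType.Exports.
Local Open Scope ring_scope.
Local Open Scope classical_set_scope.

Section MDP.
Variables (R : realType) (S A : finType).
Variable (T : S -> A -> S -> R).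
Variable (SG : {set S}).

Definition goal_trace (pi : {ffun S -> A}) (s : S) (xs : seq S) : Prop :=
  path (fun x y => 0 < T x (pi x) y) s xs /\ last s xs \in SG.

Definition bottleneck (s0 b : S) : Prop :=
  forall (pi : {ffun S -> A}) (xs : seq S),
    goal_trace pi s0 xs -> b \in s0 :: xs.

(* Truncated return  sum_{t=0}^{min(tau,N)} gamma^t Rw(x_t)
   of a state sequence x = x_0 ... x_N, where tau = first hitting time of SG. *)
Definition trunc_return (gamma : R) (Rw : S -> R) (s0 : S) (N : nat) (x : seq S) : R :=
  \sum_(t < N.+1)
     (if all (fun y => y \notin SG) (take t x)
      then gamma ^+ t * Rw (nth s0 x t) else 0).

Definition path_prob (pi : {ffun S -> A}) (s0 : S) (N : nat) (x : seq S) : R :=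
  (nth s0 x 0 == s0)%:R *
  \prod_(j < N) T (nth s0 x j) (pi (nth s0 x j)) (nth s0 x j.+1).

Definition Vtrunc (pi : {ffun S -> A}) (s0 : S) (gamma : R) (Rw : S -> R) (N : nat) : R :=
  \sum_(x : N.+1.-tuple S) path_prob pi s0 N x * trunc_return gamma Rw s0 N x.

(* V^pi(s0) = E[ sum_{t=0}^{tau} gamma^t Rw(x_t) ], as the limit of the
   expectations of the truncated returns. *)
Definition Vpi (pi : {ffun S -> A}) (s0 : S) (gamma : R) (Rw : S -> R) : R :=
  limn (Vtrunc pi s0 gamma Rw).

Definition Vstar (s0 : S) (gamma : R) (Rw : S -> R) : R :=
  sup (range (fun pi : {ffun S -> A} => Vpi pi s0 gamma Rw)).

End MDP.

Definition Rsi (R : realType) (S : finType) (SG : {set S}) (si : S) (n p : R) (s : S) : R :=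
  if s == si then n else if s \in SG then p else 0.

(* With deterministic transitions a policy induces a single trajectory, so its
   value is the discounted return of that trajectory up to its first goal
   visit.  If the trajectory reaches the goal without meeting s_i, only the
   final reward gamma^tau p > 0 survives.  If it meets s_i at time t0 before
   the goal, the return is at most gamma^t0 n + gamma^tau p <= gamma^t0 (n + p)
   <= 0, and if it never reaches the goal all rewards are nonpositive.  Hence
   some policy has positive value exactly when some goal-reaching trace avoids
   s_i. *)

From HB Require Import structures.
From mathcomp Require Import all_boot all_order all_algebra.
From mathcomp Require Import all_classical all_reals all_analysis.
From mathcomp Require Import lra.
Import Order.TTheory GRing.Theory Num.Theory.
Import numFieldNormedType.Exports.
Set Implicit Arguments. Unset Strict Implicit. Unset Printing Implicit Defensive.
Local Open Scope ring_scope.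

Lemma ex_first_hit (P : pred nat) (k : nat) :
  P k -> exists2 tau, (tau <= k)%N & P tau /\ forall t, (t < tau)%N -> ~~ P t.
Proof.
move=> Pk; case: (ex_minnP (ex_intro P k Pk)) => tau Ptau Hmin.
exists tau; first exact: Hmin.
by split=> // t lt_t; apply/negP => /Hmin; rewrite leqNgt lt_t.
Qed.

Lemma sup_range_gt0 (R : realType) (I : finType) (V : I -> R) :
  0 < sup (range V) <-> exists i, 0 < V i.
Proof.
split=> [sup_gt0|[i Vi_gt0]].
  apply: contrapT => /forallNP V_le0; move: sup_gt0; apply/negP; rewrite -leNgt.
  have [ne|empty] := pselect (range V !=set0)%classic.
    by apply: ge_sup ne _ => _ [j _ <-]; rewrite leNgt; apply/negP/V_le0.
  rewrite (_ : range V = set0)%classic ?sup0 //.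
  by apply/seteqP; split=> // y [j _ Vj]; apply: empty; exists y, j.
apply: lt_le_trans Vi_gt0 _; apply: sup_upper_bound; last by exists i.
split; first by exists (V i), i.
exists (\sum_j `|V j|) => _ [j _ <-]; apply: le_trans (ler_norm _) _.
by rewrite (bigD1 j) //= lerDl sumr_ge0.
Qed.

Definition Tdet (R : realType) (S A : finType) (f : S -> A -> S) :
  S -> A -> S -> R := fun s a s' => (s' == f s a)%:R.

Lemma deterministic_Tdet (R : realType) (S A : finType) (T : S -> A -> S -> R) :
  (forall s a s', 0 <= T s a s') -> (forall s a, \sum_s' T s a s' = 1) ->
  (forall s a, exists s', T s a s' = 1) -> exists f : S -> A -> S, T = Tdet R f.
Proof.
move=> T_ge0 T_sum1 T_det.
have T_det' s a : exists s', T s a s' == 1 by have [s' /eqP] := T_det s a; exists s'.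
exists (fun s a => xchoose (T_det' s a)).
apply/funext => s; apply/funext => a; apply/funext => s'; rewrite /Tdet.
set g := xchoose _; have Tg : T s a g = 1 by apply/eqP/(xchooseP (T_det' s a)).
case: eqP => [->//|/eqP s'_neq_g].
have : \sum_(s'' | s'' != g) T s a s'' = 0.
  by apply: (addrI 1); rewrite addr0 -{1}Tg -(T_sum1 s a) [RHS](bigD1 g).
by move/psumr_eq0P => -> //; move=> ? _; apply: T_ge0.
Qed.

Section DeterministicMDP.
Variables (R : realType) (S A : finType) (f : S -> A -> S).
Variables (SG : {set S}) (s0 : S).

Section Policy.
Variable pi : {ffun S -> A}.

Definition traj (t : nat) : S := iter t (fun s => f s (pi s)) s0.

Lemma path_TdetE (m : nat) (xs : seq S) :
  path (fun x y => 0 < Tdet R f x (pi x) y) (traj m) xs =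
  (xs == map traj (iota m.+1 (size xs))).
Proof.
elim: xs m => [|y xs IH] m //=.
rewrite {1}/Tdet ltr0n lt0b eqseq_cons; case: eqP => [->|] //=.
exact: IH m.+1.
Qed.

Lemma last_traj (m k : nat) :
  last (traj m) (map traj (iota m.+1 k)) = traj (m + k).
Proof. by elim: k m => [|k IH] m /=; rewrite ?addn0 // -addSnnS -IH. Qed.

Lemma goal_trace_TdetE (xs : seq S) :
  goal_trace (Tdet R f) SG pi s0 xs <->
  xs = map traj (iota 1 (size xs)) /\ traj (size xs) \in SG.
Proof.
have lastE : xs = map traj (iota 1 (size xs)) -> last s0 xs = traj (size xs).
  by move=> xsE; have := last_traj 0 (size xs); rewrite -xsE; apply.
rewrite /goal_trace (path_TdetE 0).
by split=> [[/eqP xsE] | [xsE]]; rewrite lastE // -xsE eqxx.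
Qed.

Lemma path_prob_Tdet (N : nat) (x : N.+1.-tuple S) :
  path_prob (Tdet R f) pi s0 N x = (tval x == map traj (iota 0 N.+1))%:R.
Proof.
rewrite /path_prob; case: (tval x =P _) => [xE|xN].
  have nthE j : (j < N.+1)%N -> nth s0 x j = traj j.
    by move=> lt_j; rewrite xE (nth_map 0) ?size_iota // nth_iota.
  rewrite nthE // eqxx mul1r big1 // => j _.
  by rewrite /Tdet !nthE ?ltnS ?(ltnW (ltn_ord j)) // eqxx.
apply/eqP/contraT; rewrite mulf_eq0 negb_or pnatr_eq0 eqb0 negbK.
case/andP=> x0E /prodf_neq0 steps; exfalso; apply: xN; apply: (@eq_from_nth _ s0).
  by rewrite size_tuple size_map size_iota.
move=> j; rewrite size_tuple => lt_j; rewrite (nth_map 0) ?size_iota // nth_iota //.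
elim: j lt_j => [|j IH] lt_j; first exact/eqP.
have := steps (Ordinal (lt_j : (j < N)%N)) isT.
by rewrite /Tdet pnatr_eq0 eqb0 negbK /= IH ?(ltnW lt_j) // => /eqP.
Qed.

Variables (gamma : R) (Rw : S -> R).

Lemma Vtrunc_Tdet (N : nat) :
  Vtrunc (Tdet R f) SG pi s0 gamma Rw N =
  \sum_(t < N.+1) (if all (fun y => y \notin SG) (map traj (iota 0 t))
                   then gamma ^+ t * Rw (traj t) else 0).
Proof.
have xtrajP : size (map traj (iota 0 N.+1)) == N.+1 by rewrite size_map size_iota.
rewrite /Vtrunc (bigD1 (Tuple xtrajP)) // path_prob_Tdet eqxx mul1r big1 /= ?addr0.
  rewrite /trunc_return; apply: eq_bigr => t _.
  rewrite -[s0 :: _]/(map traj (iota 0 N.+1)) (nth_map 0) ?size_iota // nth_iota //.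
  by rewrite -map_take take_iota (minn_idPl (ltnW (ltn_ord t))).
move=> x xN; have xN' : tval x != map traj (iota 0 N.+1).
  by apply: contra xN => /eqP xE; apply/eqP/val_inj.
by rewrite path_prob_Tdet (negbTE xN') mul0r.
Qed.

Lemma Vpi_Tdet_hit (tau : nat) :
  traj tau \in SG -> (forall t, (t < tau)%N -> traj t \notin SG) ->
  Vpi (Tdet R f) SG pi s0 gamma Rw = \sum_(t < tau.+1) gamma ^+ t * Rw (traj t).
Proof.
move=> hit_tau before_tau.
have beforeE t : all (fun y => y \notin SG) (map traj (iota 0 t)) = (t <= tau)%N.
  case: leqP => [le_t|lt_t].
    apply/allP => y /mapP[k]; rewrite mem_iota => /andP[_ lt_k] ->.
    exact: before_tau (leq_trans lt_k le_t).
  by apply/negbTE/allPn; exists (traj tau); rewrite ?negbK ?map_f ?mem_iota.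
rewrite /Vpi; apply: norm_lim_near_cst; near=> N.
have le_tau : (tau <= N)%N by near: N; exists tau.
pose F t := if all (fun y => y \notin SG) (map traj (iota 0 t))
             then gamma ^+ t * Rw (traj t) else 0.
rewrite Vtrunc_Tdet -(big_mkord xpredT F) (big_cat_nat (n := tau.+1)) //=.
rewrite [X in _ + X]big1_seq ?addr0 => [|t /andP[_]]; last first.
  by rewrite mem_index_iota => /andP[lt_t _]; rewrite /F beforeE leqNgt lt_t.
by rewrite big_mkord; apply: eq_bigr => t _; rewrite /F beforeE -ltnS ltn_ord.
Unshelve. all: by end_near.
Qed.

Lemma Vpi_Tdet_miss_le0 (m : R) :
  0 < gamma < 1 -> (forall t, traj t \notin SG) ->
  (forall t, m <= Rw (traj t) <= 0) -> Vpi (Tdet R f) SG pi s0 gamma Rw <= 0.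
Proof.
case/andP=> gamma_gt0 gamma_lt1 miss Rw_bnd; have gamma_ge0 := ltW gamma_gt0.
set u := Vtrunc (Tdet R f) SG pi s0 gamma Rw.
have uE N : u N = \sum_(t < N.+1) gamma ^+ t * Rw (traj t).
  rewrite /u Vtrunc_Tdet; apply: eq_bigr => t _; rewrite ifT //.
  by apply/allP => y /mapP[k _ ->].
have term_le0 t : gamma ^+ t * Rw (traj t) <= 0.
  by case/andP: (Rw_bnd t) => _ Rw_le0; rewrite mulr_ge0_le0 ?exprn_ge0.
have u_noninc : {homo u : a b / (a <= b)%N >-> b <= a}.
  move=> a b /subnK <-; elim: (b - a)%N => //= k IH.
  by apply: le_trans IH; rewrite addSn !uE big_ord_recr /= gerDl term_le0.
have m_le0 : m <= 0 by case/andP: (Rw_bnd 0%N) => /le_trans; apply.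
have u_lb : has_lbound (range u).
  exists (m / (1 - gamma)) => _ [N _ <-]; rewrite uE.
  apply: (@le_trans _ _ (m * \sum_(t < N.+1) gamma ^+ t)).
    apply: ler_wnM2l => //; have := geometric_le_lim N.+1 (@ler01 R) gamma_gt0.
    rewrite ger0_norm // => /(_ gamma_lt1); rewrite seriesEord /= mul1r.
    by under eq_bigr do rewrite mul1r.
  rewrite mulr_sumr; apply: ler_sum => t _; rewrite mulrC.
  by case/andP: (Rw_bnd t) => m_le _; rewrite ler_wpM2l ?exprn_ge0.
have u_cvg := nonincreasing_is_cvgn u_noninc u_lb.
apply: le_trans (nonincreasing_cvgn_ge u_noninc u_cvg 0) _.
by rewrite uE big_ord1.
Qed.

End Policy.

Definition goal_avoiding (pi : {ffun S -> A}) (b : S) : Prop :=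
  exists k, traj pi k \in SG /\ forall t, (t <= k)%N -> traj pi t != b.

Lemma not_bottleneck_TdetE (b : S) :
  ~ bottleneck (Tdet R f) SG s0 b <-> exists pi, goal_avoiding pi b.
Proof.
split=> [not_bn | [pi [k [hit avoid]]] bn].
  apply: contrapT => no_avoid; apply: not_bn => pi xs /goal_trace_TdetE [xsE hit].
  apply/idPn => b_notin; apply: no_avoid; exists pi, (size xs); split=> // t le_t.
  apply: contra b_notin => /eqP <-; rewrite xsE.
  by rewrite -[_ :: _]/(map (traj pi) (iota 0 (size xs).+1)) map_f // mem_iota.
have trace : goal_trace (Tdet R f) SG pi s0 (map (traj pi) (iota 1 k)).
  by apply/goal_trace_TdetE; rewrite size_map size_iota.
have := bn pi _ trace; rewrite -[_ :: _]/(map (traj pi) (iota 0 k.+1)).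
case/mapP=> t; rewrite mem_iota => /andP[_ lt_t] bE.
by move: (avoid t lt_t); rewrite bE eqxx.
Qed.

Section RewardRsi.
Variables (si : S) (n p gamma : R).
Hypotheses (si_notin : si \notin SG) (n_lt0 : n < 0) (p_gt0 : 0 < p) (p_le_n : p <= `|n|).
Hypothesis gamma_bnd : 0 < gamma < 1.

Local Notation Rw := (Rsi SG si n p).

Lemma Rsi_goal s : s \in SG -> Rw s = p.
Proof.
by move=> s_in; rewrite /Rsi s_in; case: eqP => // sE; move: si_notin; rewrite -sE s_in.
Qed.

Lemma Rsi_nongoal_bnd s : s \notin SG -> n <= Rw s <= 0.
Proof. by move=> /negbTE s_out; rewrite /Rsi s_out; case: eqP; rewrite ?lexx (ltW n_lt0). Qed.

Lemma Rsi_return_avoid (x : nat -> S) (tau : nat) :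
  x tau \in SG -> (forall t, (t < tau)%N -> x t \notin SG /\ x t != si) ->
  \sum_(t < tau.+1) gamma ^+ t * Rw (x t) = gamma ^+ tau * p.
Proof.
move=> hit before; rewrite big_ord_recr /= Rsi_goal // big1 ?add0r // => t _.
have [/negbTE out /negbTE ne] := before t (ltn_ord t).
by rewrite /Rsi ne out mulr0.
Qed.

Lemma Rsi_return_visit_le0 (x : nat -> S) (tau t0 : nat) :
  x tau \in SG -> (forall t, (t < tau)%N -> x t \notin SG) ->
  (t0 < tau)%N -> x t0 = si -> \sum_(t < tau.+1) gamma ^+ t * Rw (x t) <= 0.
Proof.
move=> hit before lt_t0 visit; have [gamma_gt0 gamma_lt1] := andP gamma_bnd.
have gamma_ge0 := ltW gamma_gt0; have Rw_si : Rw si = n by rewrite /Rsi eqxx.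
rewrite big_ord_recr /= Rsi_goal // (bigD1 (Ordinal lt_t0)) //= visit Rw_si.
have rest_le0 : \sum_(t < tau | t != Ordinal lt_t0) gamma ^+ t * Rw (x t) <= 0.
  apply: sumr_le0 => t _; have /andP[_ Rw_le0] := Rsi_nongoal_bnd (before t (ltn_ord t)).
  by rewrite mulr_ge0_le0 ?exprn_ge0.
have discount : gamma ^+ tau <= gamma ^+ t0.
  exact: (ler_wiXn2l gamma_ge0 (ltW gamma_lt1) (ltnW lt_t0)).
have : gamma ^+ tau * p <= gamma ^+ t0 * p by rewrite ler_wpM2r // (ltW p_gt0).
have : gamma ^+ t0 * (n + p) <= 0.
  by rewrite mulr_ge0_le0 ?exprn_ge0 //; move: p_le_n; rewrite ltr0_norm //; lra.
lra.
Qed.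

Lemma Vpi_Rsi_gt0 (pi : {ffun S -> A}) :
  0 < Vpi (Tdet R f) SG pi s0 gamma Rw <-> goal_avoiding pi si.
Proof.
have [gamma_gt0 _] := andP gamma_bnd.
split=> [V_gt0 | [k [hit avoid]]]; last first.
  have [tau le_tau [hit_tau before]] := @ex_first_hit (fun t => traj pi t \in SG) k hit.
  rewrite (Vpi_Tdet_hit gamma Rw hit_tau before) (Rsi_return_avoid hit_tau).
    by rewrite mulr_gt0 ?exprn_gt0.
  by move=> t lt_t; rewrite before ?avoid // (leq_trans (ltnW lt_t) le_tau).
apply: contrapT => no_avoid; move: V_gt0; apply/negP; rewrite -leNgt.
have [[k hit] | miss] := pselect (exists k, traj pi k \in SG); last first.
  apply: (Vpi_Tdet_miss_le0 (m := n)) => // [t | t]; last apply: Rsi_nongoal_bnd;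
    by apply/negP => hit; apply: miss; exists t.
have [tau _ [hit_tau before]] := @ex_first_hit (fun t => traj pi t \in SG) k hit.
have [t0 le_t0 visit] : exists2 t0, (t0 <= tau)%N & traj pi t0 = si.
  apply: contrapT => no_visit; apply: no_avoid; exists tau; split=> // t le_t.
  by apply/eqP => visit; apply: no_visit; exists t.
have lt_t0 : (t0 < tau)%N.
  by rewrite ltn_neqAle le_t0 andbT; apply: contraTneq hit_tau => <-; rewrite visit.
rewrite (Vpi_Tdet_hit gamma Rw hit_tau before).
exact: (Rsi_return_visit_le0 (x := traj pi) hit_tau before lt_t0 visit).
Qed.

End RewardRsi.

End DeterministicMDP.

Theorem proposition3 (R : realType) (S A : finType) (T : S -> A -> S -> R)
  (s0 : S) (gamma : R) (SG : {set S})
  (HT0 : forall s a s', 0 <= T s a s')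
  (HT1 : forall s a, \sum_(s' : S) T s a s' = 1)
  (Hdet : forall s a, exists s', T s a s' = 1)
  (Habs : forall s a, s \in SG -> T s a s = 1)
  (Hgamma : 0 < gamma < 1)
  (si : S) (Hsi : si \notin SG) (n p : R)
  (Hn : n < 0) (Hp : 0 < p) (Hnp : p <= `|n|) :
  ~ bottleneck T SG s0 si <-> 0 < Vstar T SG s0 gamma (Rsi SG si n p).
Proof.
have [f ->] := deterministic_Tdet HT0 HT1 Hdet.
rewrite not_bottleneck_TdetE /Vstar sup_range_gt0.
by split=> -[pi avoid]; exists pi; apply/(Vpi_Rsi_gt0 f s0 Hsi Hn Hp Hnp Hgamma).
Qed.
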